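(* Consider an EF neuron as in the context. Suppose (1) all input spikes are received within the input time window, i.e. $\mathcal F_i^{in}\subseteq\{0,\ldots,T^{in}-1\}$ for all $i\in\Gamma$, and (2) the neuron fires no output spike before the beginning of its output time window, i.e. $\mathcal F^{out}\cap\{0,\ldots,T^{in}-2\}=\emptyset$. For each $i\in\Gamma$ let $\tilde a_i=\sum_{t\in\mathcal F_i^{in}}2^{e^{in}_{max}-t}$ be the value encoded by the $i$-th input LTC spike train, and let $y=\max\big(\sum_{i\in\Gamma}w_i\tilde a_i,\,0\big)$ (the output of an analog ReLU neuron with inputs $\tilde a_i$ and weights $w_i$). Let $S\subseteq\{0,\ldots,T^{out}-1\}$ be the set of spike times of the LTC spike train of $y$ with output exponent range $\{e^{out}_{min},\ldots,e^{out}_{max}\}$ (multi-spike LTC for a multi-spike EF neuron, single-spike LTC for a single-spike EF neuron). Then $\mathcal F^{out}\cap\{T^{in}-1,\ldots,T^{in}+T^{out}-2\}=\{T^{in}-1+s: s\in S\}$.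
   Context: Exponentiate-and-Fire (EF) neuron (discrete time $t\in\mathbb Z$). Fix integers $e^{in}_{min}\le e^{in}_{max}$ (input exponent range), $T^{in}=e^{in}_{max}-e^{in}_{min}+1$ (input time window $\{0,\ldots,T^{in}-1\}$), and integers $e^{out}_{min}\le e^{out}_{max}$ (output exponent range), $T^{out}=e^{out}_{max}-e^{out}_{min}+1$. The output time window is $\{T^{in}-1,\ldots,T^{in}+T^{out}-2\}$. The firing threshold is $V_{th}=2^{e^{out}_{max}}$. The neuron has a finite set $\Gamma$ of synapses with real weights $w_i$, and for each $i\in\Gamma$ a finite set $\mathcal F_i^{in}\subseteq\{0,1,2,\ldots\}$ of input spike times. PSP kernel: $\epsilon(s)=2^{e^{in}_{min}}\cdot 2^{s}\cdot\mathbb 1(s\ge 0)$; total PSP $h_i(t)=\sum_{t^{in}\in\mathcal F_i^{in}}\epsilon(t-t^{in})$. With $\mathcal F^{out}\subseteq\mathbb Z$ the set of output spike times and $\eta$ the afterhyperpolarizing kernel, the membrane potential is $V_m(t)=\sum_{i\in\Gamma}w_i h_i(t)+\sum_{t^{out}\in\mathcal F^{out}}\eta(t-t^{out})\,\mathbb 1(t\ge t^{out})$ and the pre-reset membrane potential is $V_m^-(t)=V_m(t)-\eta(0)\,\mathbb 1(t\in\mathcal F^{out})$ (which depends only on output spikes at times $<t$). Output spikes are generated recursively in time: $t\in\mathcal F^{out}$ if and only if $V_m^-(t)\ge V_{th}$ (so no output spikes occur at negative times, where $V_m^-=0$). For a multi-spike EF neuron, the output spike at $t^{out}$ contributes $\eta(s)=-V_{th}\cdot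 2^{s}$ (reset by subtraction); for a single-spike EF neuron it contributes $\eta(s)=-V_m^-(t^{out})\cdot 2^{s}$ (reset to zero). Logarithmic approximation and LTC, for integers $e_{min}\le e_{max}$ and real $a$: the multi-power LA is $\tilde a=0$ if $a<2^{e_{min}}$, $\tilde a=\lfloor a/2^{e_{min}}\rfloor 2^{e_{min}}$ if $2^{e_{min}}\le a<2^{e_{max}+1}$, $\tilde a=2^{e_{max}+1}-2^{e_{min}}$ if $a\ge 2^{e_{max}+1}$. The single-power LA is $\tilde a=0$ if $a<2^{e_{min}}$, $\tilde a=2^{\lfloor\log_2 a\rfloor}$ if $2^{e_{min}}\le a<2^{e_{max}+1}$, $\tilde a=2^{e_{max}}$ if $a\ge 2^{e_{max}+1}$. Writing $\tilde a=\sum_{e\in E}2^e$ with distinct $E\subseteq\{e_{min},\ldots,e_{max}\}$, the LTC spike train of $a$ is the set of spike times $\{e_{max}-e: e\in E\}\subseteq\{0,\ldots,e_{max}-e_{min}\}$; it is called multi-spike LTC when multi-power LA is used and single-spike LTC when single-power LA is used. Conversely, a spike at time $t$ of an LTC spike train with exponent range $\{e_{min},\ldots,e_{max}\}$ represents $2^{e_{max}-t}$, and the train encodes the sum of these powers. *)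

From Stdlib Require Import Reals List ZArith.
Open Scope R_scope.

Definition rsum {A : Type} (f : A -> R) (l : list A) : R :=
  fold_right (fun x acc => f x + acc) 0 l.

Definition pow2 (z : Z) : R := powerRZ 2 z.

Definition Tin (einmin einmax : Z) : nat := Z.to_nat (einmax - einmin + 1).
Definition Tout (eoutmin eoutmax : Z) : nat := Z.to_nat (eoutmax - eoutmin + 1).

Definition psp (einmin : Z) (s : Z) : R :=
  if (0 <=? s)%Z then pow2 einmin * pow2 s else 0.

Definition h_psp (einmin : Z) (Fi : list nat) (t : nat) : R :=
  rsum (fun tin => psp einmin (Z.of_nat t - Z.of_nat tin)) Fi.

(* synaptic part of the membrane potential: sum_{i in Gamma} w_i h_i(t),
   with Gamma = {0,...,n-1} *)
Definition Vsyn (einmin : Z) (n : nat) (w : nat -> R) (Fin : nat -> list nat)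
  (t : nat) : R :=
  rsum (fun i => w i * h_psp einmin (Fin i) t) (seq 0 n).

Inductive ef_kind := MultiSpike | SingleSpike.

(* potential at time t given a history of earlier output spikes (t_out, c),
   each contributing eta(s) = - c * 2^s with s = t - t_out *)
Definition Vpre_of (Vs : nat -> R) (hs : list (nat * R)) (t : nat) : R :=
  Vs t + rsum (fun p => - snd p * pow2 (Z.of_nat t - Z.of_nat (fst p))) hs.

(* out_hist k Vth Vs t = list of output spikes at times < t, together with
   their afterhyperpolarization amplitude (Vth for multi-spike: reset by
   subtraction; V_m^-(t_out) for single-spike: reset to zero). *)
Fixpoint out_hist (k : ef_kind) (Vth : R) (Vs : nat -> R) (t : nat)
  : list (nat * R) :=
  match t with
  | O => nil
  | S t' =>
      let hs := out_hist k Vth Vs t' in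
      let v := Vpre_of Vs hs t' in
      if Rle_dec Vth v
      then hs ++ ((t', match k with MultiSpike => Vth | SingleSpike => v end) :: nil)
      else hs
  end.

(* pre-reset membrane potential V_m^-(t) (depends on output spikes < t) *)
Definition Vpre (k : ef_kind) (Vth : R) (Vs : nat -> R) (t : nat) : R :=
  Vpre_of Vs (out_hist k Vth Vs t) t.

Definition ef_fires (k : ef_kind) (einmin eoutmax : Z) (n : nat)
  (w : nat -> R) (Fin : nat -> list nat) (t : nat) : Prop :=
  pow2 eoutmax <= Vpre k (pow2 eoutmax) (Vsyn einmin n w Fin) t.

(* floor is Int_part; floor(log2 a) is Int_part (ln a / ln 2) *)
Definition LA_multi (emin emax : Z) (a : R) : R :=
  if Rlt_dec a (pow2 emin) then 0
  else if Rlt_dec a (pow2 (emax + 1))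
  then IZR (Int_part (a / pow2 emin)) * pow2 emin
  else pow2 (emax + 1) - pow2 emin.

Definition LA_single (emin emax : Z) (a : R) : R :=
  if Rlt_dec a (pow2 emin) then 0
  else if Rlt_dec a (pow2 (emax + 1))
  then pow2 (Int_part (ln a / ln 2))
  else pow2 emax.

Definition LA (k : ef_kind) : Z -> Z -> R -> R :=
  match k with MultiSpike => LA_multi | SingleSpike => LA_single end.

(* S is the LTC spike train of a: S is a set of distinct times in
   {0,...,emax-emin} with  LA(a) = sum_{s in S} 2^(emax - s)
   (i.e. S = {emax - e : e in E} for the representation LA(a) = sum_{e in E} 2^e) *)
Definition is_LTC (k : ef_kind) (emin emax : Z) (a : R) (S : list nat) : Prop :=
  NoDup S /\
  (forall s, In s S -> (Z.of_nat s <= emax - emin)%Z) /\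
  rsum (fun s => pow2 (emax - Z.of_nat s)) S = LA k emin emax a.

Definition LTC_decode (emax : Z) (F : list nat) : R :=
  rsum (fun t => pow2 (emax - Z.of_nat t)) F.

Definition relu_out (einmax : Z) (n : nat) (w : nat -> R) (Fin : nat -> list nat) : R :=
  Rmax (rsum (fun i => w i * LTC_decode einmax (Fin i)) (seq 0 n)) 0.

From Stdlib Require Import Reals List ZArith Lia Lra.
Open Scope R_scope.

(* Let N = T^in and A = sum_i w_i a~_i.  Since all input spikes
   arrive before N - 1, every PSP doubles at each step of the output window,
   and with no earlier output spike V_m^-(N - 1) = A.  Writing
   V_m^-(N - 1 + j) = 2^j r_j, the normalised potential r_j follows a greedy
   binary expansion of A: the neuron fires at N - 1 + j iff
   r_j >= 2^(e_max - j), and then r_{j+1} = r_j - 2^(e_max - j) (reset by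
   subtraction) or r_{j+1} = 0 (reset to zero). *)

Lemma pow2_pos z : 0 < pow2 z.
Proof. unfold pow2; apply powerRZ_lt; lra. Qed.

Lemma pow2_add a b : pow2 (a + b) = pow2 a * pow2 b.
Proof. unfold pow2; apply powerRZ_add; lra. Qed.

Lemma pow2_Rpower z : pow2 z = Rpower 2 (IZR z).
Proof. unfold pow2; apply powerRZ_Rpower; lra. Qed.

Lemma pow2_le a b : (a <= b)%Z -> pow2 a <= pow2 b.
Proof.
  intros Hab; rewrite !pow2_Rpower; apply Rle_Rpower; [lra | apply IZR_le; auto].
Qed.

Lemma pow2_succ z : pow2 (z + 1) = 2 * pow2 z.
Proof. rewrite pow2_add; unfold pow2 at 2; simpl; lra. Qed.

Lemma pow2_scaled_threshold e j u :
  pow2 e <= pow2 (Z.of_nat j) * u <-> pow2 (e - Z.of_nat j) <= u.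
Proof.
  replace (pow2 e) with (pow2 (Z.of_nat j) * pow2 (e - Z.of_nat j))
    by (rewrite <- pow2_add; f_equal; lia).
  pose proof (pow2_pos (Z.of_nat j)) as Hpos.
  split; intros H.
  - exact (Rmult_le_reg_l _ _ _ Hpos H).
  - apply Rmult_le_compat_l; lra.
Qed.

Lemma pow2_log_bounds A : 0 < A ->
  pow2 (Int_part (ln A / ln 2)) <= A < pow2 (Int_part (ln A / ln 2) + 1).
Proof.
  intros HA. set (L := ln A / ln 2).
  assert (Hln2 : 0 < ln 2) by (pose proof ln_lt_2; lra).
  assert (HAL : A = Rpower 2 L).
  { unfold Rpower, L. replace (ln A / ln 2 * ln 2) with (ln A) by (field; lra).
    rewrite exp_ln; auto. }
  destruct (base_Int_part L) as [Hfl1 Hfl2].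
  rewrite !pow2_Rpower, plus_IZR, HAL. split.
  - apply Rle_Rpower; lra.
  - apply Rpower_lt; lra.
Qed.

Lemma rsum_app {A} (f : A -> R) l m : rsum f (l ++ m) = rsum f l + rsum f m.
Proof. induction l; simpl; [lra | rewrite IHl; lra]. Qed.

Lemma rsum_ext_in {A} (f g : A -> R) l :
  (forall x, In x l -> f x = g x) -> rsum f l = rsum g l.
Proof. induction l; simpl; intros H; auto. rewrite H, IHl; auto. Qed.

Lemma rsum_plus {A} (f g : A -> R) l :
  rsum (fun x => f x + g x) l = rsum f l + rsum g l.
Proof. induction l; simpl; [lra | rewrite IHl; lra]. Qed.

Lemma rsum_scale {A} (c : R) (f : A -> R) l :
  rsum (fun x => c * f x) l = c * rsum f l.
Proof. induction l; simpl; [lra | rewrite IHl; lra]. Qed.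

Lemma rsum_nonneg {A} (f : A -> R) l : (forall x, 0 <= f x) -> 0 <= rsum f l.
Proof.
  induction l; simpl; intros H; [lra |].
  pose proof (H a); pose proof (IHl H); lra.
Qed.

Lemma rsum_ge_elem {A} (f : A -> R) l a :
  (forall x, 0 <= f x) -> In a l -> f a <= rsum f l.
Proof.
  induction l as [|b l IH]; simpl; intros H Hin; [contradiction |].
  destruct Hin as [<- | Hin].
  - pose proof (rsum_nonneg f l H); lra.
  - specialize (IH H Hin); specialize (H b); lra.
Qed.

Lemma rsum_incl_le {A} (f : A -> R) (l m : list A) :
  (forall x, 0 <= f x) -> NoDup l -> NoDup m ->
  (forall x, In x l -> f x = 0 \/ In x m) -> rsum f l <= rsum f m.
Proof.
  intros Hf; revert m; induction l as [|a l IH]; intros m Hl Hm Hin; simpl.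
  - apply rsum_nonneg; auto.
  - inversion Hl as [|? ? Ha Hl']; subst.
    destruct (Hin a (or_introl eq_refl)) as [Hz | Ham].
    + rewrite Hz, Rplus_0_l. apply IH; auto. intros x Hx; apply Hin; simpl; auto.
    + destruct (in_split _ _ Ham) as (m1 & m2 & ->).
      assert (Hrest : rsum f l <= rsum f (m1 ++ m2)).
      { apply IH; [auto | eapply NoDup_remove_1; eauto |].
        intros x Hx. destruct (Hin x (or_intror Hx)) as [? | Hxm]; auto.
        right. apply in_app_or in Hxm. apply in_or_app.
        destruct Hxm as [? | [<- | ?]]; auto; contradiction. }
      rewrite rsum_app in *; simpl; lra.
Qed.

Lemma rsum_at_index (f : nat -> R) l j : NoDup l ->
  rsum (fun s => if Nat.eqb s j then f s else 0) l =
  if in_dec Nat.eq_dec j l then f j else 0.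
Proof.
  induction l as [|a l IH]; intros Hl; [reflexivity |].
  change (rsum ?g (a :: l)) with (g a + rsum g l).
  inversion Hl as [|? ? Ha Hl']; subst. rewrite IH by auto.
  destruct (in_dec Nat.eq_dec j (a :: l)) as [Hin | Hnin];
    destruct (in_dec Nat.eq_dec j l) as [Hinl | Hninl];
    destruct (Nat.eqb_spec a j) as [<- | Hne];
    cbn [In] in *; try tauto; try lra.
Qed.

Definition ltc_weight (emax : Z) (s : nat) : R := pow2 (emax - Z.of_nat s).

Lemma ltc_weight_nonneg emax s : 0 <= ltc_weight emax s.
Proof. apply Rlt_le, pow2_pos. Qed.

Lemma rsum_ltc_weight_seq emax a len :
  rsum (ltc_weight emax) (seq a len) =
  pow2 (emax - Z.of_nat a + 1) - pow2 (emax - Z.of_nat a - Z.of_nat len + 1).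
Proof.
  revert a; induction len as [|len IH]; intros a.
  - simpl. replace (emax - Z.of_nat a - 0 + 1)%Z with (emax - Z.of_nat a + 1)%Z
      by lia. lra.
  - change (rsum (ltc_weight emax) (seq a (S len)))
      with (ltc_weight emax a + rsum (ltc_weight emax) (seq (S a) len)).
    rewrite IH. unfold ltc_weight.
    replace (emax - Z.of_nat (S a) + 1)%Z with (emax - Z.of_nat a)%Z by lia.
    replace (emax - Z.of_nat (S a) - Z.of_nat len + 1)%Z
      with (emax - Z.of_nat a - Z.of_nat (S len) + 1)%Z by lia.
    rewrite (pow2_succ (emax - Z.of_nat a)). lra.
Qed.

Lemma ltc_weight_sum_zero emax spikes j : rsum (ltc_weight emax) spikes = 0 -> ~ In j spikes.
Proof.
  intros Hz Hj. pose proof (rsum_ge_elem _ spikes j (ltc_weight_nonneg emax) Hj).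
  pose proof (pow2_pos (emax - Z.of_nat j)). unfold ltc_weight in *. lra.
Qed.

Definition reset (k : ef_kind) (threshold u : R) : R :=
  match k with MultiSpike => u - threshold | SingleSpike => 0 end.

Fixpoint residual (k : ef_kind) (emax : Z) (A : R) (j : nat) : R :=
  match j with
  | O => A
  | S j' =>
      let u := residual k emax A j' in
      let threshold := pow2 (emax - Z.of_nat j') in
      if Rle_dec threshold u then reset k threshold u else u
  end.

Lemma residual_succ k emax A j : residual k emax A (S j) =
  if Rle_dec (pow2 (emax - Z.of_nat j)) (residual k emax A j)
  then reset k (pow2 (emax - Z.of_nat j)) (residual k emax A j)
  else residual k emax A j.
Proof. reflexivity. Qed.

Definition greedy_spike (k : ef_kind) (emax : Z) (A : R) (j : nat) : Prop :=
  pow2 (emax - Z.of_nat j) <= residual k emax A j.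

Lemma residual_below_resolution k emin emax D A :
  Z.of_nat D = (emax - emin)%Z -> A < pow2 emin ->
  forall j, (j <= S D)%nat -> residual k emax A j = A.
Proof.
  intros HD HA; induction j as [|j IH]; intros Hj; simpl; auto.
  rewrite IH by lia. destruct Rle_dec as [Hle|]; auto.
  pose proof (pow2_le emin (emax - Z.of_nat j) ltac:(lia)). lra.
Qed.

Lemma no_greedy_spike_below_resolution k emin emax D A j :
  Z.of_nat D = (emax - emin)%Z -> A < pow2 emin -> (j <= D)%nat ->
  ~ greedy_spike k emax A j.
Proof.
  unfold greedy_spike. intros HD HA Hj.
  rewrite (residual_below_resolution k emin emax D A HD HA j) by lia.
  pose proof (pow2_le emin (emax - Z.of_nat j) ltac:(lia)). lra.
Qed.

(* Subtractive greedy expansion: if distinct times in [0, D] have weights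
   summing to A up to an error in [0, 2^e_min), the process spikes exactly
   at these times.  Invariant: before step j the residual is A minus the
   weights of the times smaller than j. *)
Section GreedyExpansion.
Variables (emin emax : Z) (D : nat) (times : list nat) (A : R).
Hypothesis HD : Z.of_nat D = (emax - emin)%Z.
Hypothesis Htimes_nodup : NoDup times.
Hypothesis Htimes_bound : forall s, In s times -> (s <= D)%nat.
Hypothesis HA_approx : 0 <= A - rsum (ltc_weight emax) times < pow2 emin.

Definition prefix_weight (j : nat) : R :=
  rsum (fun s => if Nat.ltb s j then ltc_weight emax s else 0) times.

(* The weights of the times >= j reach 2^(e_max - j) iff j is one of them:
   without j, they are at most the weights of all times in (j, D]. *)
Lemma prefix_residual_threshold j : (j <= D)%nat ->
  (pow2 (emax - Z.of_nat j) <= A - prefix_weight j <-> In j times).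
Proof.
  intros Hj.
  set (tail := rsum (fun s => if Nat.ltb s j then 0 else ltc_weight emax s) times).
  assert (Hsplit : rsum (ltc_weight emax) times = prefix_weight j + tail).
  { unfold prefix_weight, tail; rewrite <- rsum_plus.
    apply rsum_ext_in; intros x _. destruct (Nat.ltb x j); lra. }
  assert (Htail_nonneg :
    forall x, 0 <= (if Nat.ltb x j then 0 else ltc_weight emax x)).
  { intros x; destruct (Nat.ltb x j); [lra | apply ltc_weight_nonneg]. }
  split.
  - intros Hle. destruct (in_dec Nat.eq_dec j times) as [| Hnot]; auto. exfalso.
    assert (Htail : tail <= rsum (ltc_weight emax) (seq (S j) (D - j))).
    { replace (rsum (ltc_weight emax) (seq (S j) (D - j))) with
        (rsum (fun s => if Nat.ltb s j then 0 else ltc_weight emax s) (seq (S j) (D - j))).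
      - apply rsum_incl_le; auto using seq_NoDup.
        intros x Hx. destruct (Nat.ltb_spec x j); auto.
        right. apply in_seq. specialize (Htimes_bound x Hx).
        assert (x <> j) by (intros ->; contradiction). lia.
      - apply rsum_ext_in. intros x Hx. apply in_seq in Hx.
        destruct (Nat.ltb_spec x j); [lia | reflexivity]. }
    rewrite rsum_ltc_weight_seq in Htail.
    replace (emax - Z.of_nat (S j) + 1)%Z with (emax - Z.of_nat j)%Z in Htail
      by lia.
    replace (emax - Z.of_nat (S j) - Z.of_nat (D - j) + 1)%Z with emin in Htail
      by lia.
    lra.
  - intros Hin.
    assert (Hj_tail : ltc_weight emax j <= tail).
    { unfold tail.
      pose proof (rsum_ge_elem _ times j Htail_nonneg Hin) as Hge.
      cbv beta in Hge. rewrite Nat.ltb_irrefl in Hge. exact Hge. }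
    unfold ltc_weight in Hj_tail. lra.
Qed.

Lemma residual_multi_prefix j : (j <= S D)%nat ->
  residual MultiSpike emax A j = A - prefix_weight j.
Proof.
  induction j as [|j IH]; intros Hj.
  - unfold prefix_weight. rewrite (rsum_ext_in _ (fun _ => 0 * 0)).
    + rewrite rsum_scale; simpl; lra.
    + intros x _. destruct x; simpl; lra.
  - assert (Hstep : prefix_weight (S j) = prefix_weight j +
        rsum (fun s => if Nat.eqb s j then ltc_weight emax s else 0) times).
    { unfold prefix_weight. rewrite <- rsum_plus. apply rsum_ext_in; intros x _.
      destruct (Nat.ltb_spec x (S j)); destruct (Nat.ltb_spec x j);
        destruct (Nat.eqb_spec x j); try lia; lra. }
    cbn [residual]. rewrite IH by lia.
    rewrite Hstep, rsum_at_index by auto.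
    pose proof (prefix_residual_threshold j ltac:(lia)) as Hiff.
    destruct Rle_dec as [Hle | Hlt]; destruct (in_dec Nat.eq_dec j times);
      simpl; unfold ltc_weight; try lra; tauto.
Qed.

Lemma greedy_multi_spikes j : (j <= D)%nat ->
  (greedy_spike MultiSpike emax A j <-> In j times).
Proof.
  intros Hj. unfold greedy_spike. rewrite residual_multi_prefix by lia.
  apply prefix_residual_threshold; auto.
Qed.
End GreedyExpansion.

Lemma ltc_weight_sum_inj emin emax D S1 S2 : Z.of_nat D = (emax - emin)%Z ->
  NoDup S1 -> (forall s, In s S1 -> (s <= D)%nat) ->
  NoDup S2 -> (forall s, In s S2 -> (s <= D)%nat) ->
  rsum (ltc_weight emax) S1 = rsum (ltc_weight emax) S2 ->
  forall j, (j <= D)%nat -> (In j S1 <-> In j S2).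
Proof.
  intros HD HN1 HB1 HN2 HB2 Heq j Hj.
  pose proof (pow2_pos emin).
  set (A := rsum (ltc_weight emax) S1).
  rewrite <- (greedy_multi_spikes emin emax D S1 A), <- (greedy_multi_spikes emin emax D S2 A);
    unfold A; auto; try tauto; lra.
Qed.

Lemma residual_multi_saturated emax A : pow2 (emax + 1) <= A ->
  forall j, pow2 (emax + 1 - Z.of_nat j) <= residual MultiSpike emax A j.
Proof.
  intros HA; induction j as [|j IH]; cbn [residual reset].
  - replace (emax + 1 - Z.of_nat 0)%Z with (emax + 1)%Z by lia; auto.
  - replace (emax + 1 - Z.of_nat j)%Z with (emax - Z.of_nat j + 1)%Z in IH by lia.
    rewrite pow2_succ in IH.
    replace (emax + 1 - Z.of_nat (S j))%Z with (emax - Z.of_nat j)%Z by lia.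
    destruct Rle_dec; [lra |]. pose proof (pow2_pos (emax - Z.of_nat j)). lra.
Qed.

Lemma greedy_single_spikes emax A e s0 : Z.of_nat s0 = (emax - e)%Z ->
  pow2 e <= A ->
  (forall j, (j < s0)%nat -> A < pow2 (emax - Z.of_nat j)) ->
  forall j, (greedy_spike SingleSpike emax A j <-> j = s0).
Proof.
  unfold greedy_spike. intros Hs0 He Hbelow.
  assert (Hbefore : forall j, (j <= s0)%nat -> residual SingleSpike emax A j = A).
  { induction j as [|j IH]; intros Hj; simpl; auto. rewrite IH by lia.
    destruct Rle_dec; auto. specialize (Hbelow j ltac:(lia)). lra. }
  assert (Hafter : forall m, residual SingleSpike emax A (S (s0 + m)) = 0).
  { induction m as [|m IH].
    - rewrite Nat.add_0_r, residual_succ, Hbefore by lia.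
      destruct Rle_dec as [|Hlt]; [reflexivity |].
      replace (emax - Z.of_nat s0)%Z with e in Hlt by lia. lra.
    - replace (s0 + S m)%nat with (S (s0 + m)) by lia.
      rewrite residual_succ, IH. destruct Rle_dec; reflexivity. }
  intros j. destruct (lt_eq_lt_dec j s0) as [[Hlt | ->] | Hgt].
  - rewrite Hbefore by lia. specialize (Hbelow j Hlt). split; intros; [lra | lia].
  - rewrite Hbefore by lia. replace (emax - Z.of_nat s0)%Z with e by lia. tauto.
  - replace j with (S (s0 + (j - S s0))) by lia. rewrite Hafter.
    pose proof (pow2_pos (emax - Z.of_nat (S (s0 + (j - S s0))))).
    split; intros; [lra | lia].
Qed.

Lemma greedy_multi_LTC emin emax D A spikes : Z.of_nat D = (emax - emin)%Z ->
  NoDup spikes -> (forall s, In s spikes -> (s <= D)%nat) ->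
  rsum (ltc_weight emax) spikes = LA_multi emin emax (Rmax A 0) ->
  forall j, (j <= D)%nat -> (greedy_spike MultiSpike emax A j <-> In j spikes).
Proof.
  intros HD HN HB Hsum j Hj. unfold LA_multi in Hsum.
  pose proof (pow2_pos emin) as Hmin.
  destruct (Rlt_dec (Rmax A 0) (pow2 emin)) as [Hlow | Hhigh].
  { pose proof (Rmax_l A 0).
    split; [intros Hsp | intros Hin].
    - exfalso; apply (no_greedy_spike_below_resolution MultiSpike emin emax D A j); auto; lra.
    - exfalso; apply (ltc_weight_sum_zero emax spikes j); auto. }
  assert (HA : Rmax A 0 = A) by (unfold Rmax in *; destruct Rle_dec; lra).
  rewrite HA in *.
  destruct (Rlt_dec A (pow2 (emax + 1))) as [Hin_range | Hsat].
  - (* A differs from its truncation floor(A / 2^e_min) 2^e_min by < 2^e_min *)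
    apply (greedy_multi_spikes emin emax D spikes A); auto.
    rewrite Hsum. set (p := pow2 emin) in *.
    destruct (base_Int_part (A / p)) as [Hfl1 Hfl2].
    assert (A = A / p * p) by (field; lra).
    split; nra.
  - (* all thresholds are reached, and the train must contain every time in [0, D] *)
    assert (Hfull : rsum (ltc_weight emax) spikes = rsum (ltc_weight emax) (seq 0 (S D))).
    { rewrite Hsum, rsum_ltc_weight_seq. f_equal; f_equal; lia. }
    rewrite (ltc_weight_sum_inj emin emax D spikes (seq 0 (S D)) HD HN HB (seq_NoDup _ _)
      ltac:(intros s Hs; apply in_seq in Hs; lia) Hfull j Hj).
    split; intros _; [apply in_seq; lia |].
    unfold greedy_spike.
    pose proof (residual_multi_saturated emax A ltac:(lra) j).
    pose proof (pow2_le (emax - Z.of_nat j) (emax + 1 - Z.of_nat j) ltac:(lia)). lra.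
Qed.

Lemma greedy_single_LTC emin emax D A spikes : Z.of_nat D = (emax - emin)%Z ->
  NoDup spikes -> (forall s, In s spikes -> (s <= D)%nat) ->
  rsum (ltc_weight emax) spikes = LA_single emin emax (Rmax A 0) ->
  forall j, (j <= D)%nat -> (greedy_spike SingleSpike emax A j <-> In j spikes).
Proof.
  intros HD HN HB Hsum j Hj. unfold LA_single in Hsum.
  pose proof (pow2_pos emin) as Hmin.
  destruct (Rlt_dec (Rmax A 0) (pow2 emin)) as [Hlow | Hhigh].
  { pose proof (Rmax_l A 0).
    split; [intros Hsp | intros Hin].
    - exfalso; apply (no_greedy_spike_below_resolution SingleSpike emin emax D A j); auto; lra.
    - exfalso; apply (ltc_weight_sum_zero emax spikes j); auto. }
  assert (HA : Rmax A 0 = A) by (unfold Rmax in *; destruct Rle_dec; lra).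
  rewrite HA in *.
  assert (Hone : forall e, (emin <= e <= emax)%Z -> pow2 e <= A ->
    (forall j, (j < Z.to_nat (emax - e))%nat -> A < pow2 (emax - Z.of_nat j)) ->
    rsum (ltc_weight emax) spikes = pow2 e ->
    (greedy_spike SingleSpike emax A j <-> In j spikes)).
  { intros e He Hle Hbelow HSe.
    rewrite (greedy_single_spikes emax A e (Z.to_nat (emax - e)) ltac:(lia) Hle Hbelow j).
    assert (Hsingleton : rsum (ltc_weight emax) spikes =
                         rsum (ltc_weight emax) (Z.to_nat (emax - e) :: nil)).
    { rewrite HSe. simpl. unfold ltc_weight. rewrite Rplus_0_r. f_equal. lia. }
    rewrite (ltc_weight_sum_inj emin emax D spikes (Z.to_nat (emax - e) :: nil) HD HN HB
      (NoDup_cons _ (@in_nil nat _) (NoDup_nil _))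
      ltac:(intros s [<- | []]; lia) Hsingleton j Hj).
    simpl. intuition. }
  destruct (Rlt_dec A (pow2 (emax + 1))) as [Hin_range | Hsat].
  - set (e := Int_part (ln A / ln 2)) in *.
    destruct (pow2_log_bounds A ltac:(lra)) as [Hlo Hhi]. fold e in Hlo, Hhi.
    assert (He1 : (emin <= e)%Z).
    { destruct (Z_le_gt_dec emin e); auto.
      pose proof (pow2_le (e + 1) emin ltac:(lia)). lra. }
    assert (He2 : (e <= emax)%Z).
    { destruct (Z_le_gt_dec e emax); auto.
      pose proof (pow2_le (emax + 1) e ltac:(lia)). lra. }
    apply (Hone e); auto.
    intros j' Hj'. pose proof (pow2_le (e + 1) (emax - Z.of_nat j') ltac:(lia)). lra.
  - apply (Hone emax); auto; try lia.
    pose proof (pow2_le emax (emax + 1) ltac:(lia)). lra.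
Qed.

Lemma greedy_LTC k emin emax A spikes : (emin <= emax)%Z ->
  is_LTC k emin emax (Rmax A 0) spikes ->
  forall j, (Z.of_nat j <= emax - emin)%Z -> (greedy_spike k emax A j <-> In j spikes).
Proof.
  intros Hle [Hnodup [HB Hsum]] j Hj.
  set (D := Z.to_nat (emax - emin)).
  assert (HD : Z.of_nat D = (emax - emin)%Z) by (unfold D; lia).
  assert (HBD : forall s, In s spikes -> (s <= D)%nat) by (intros s Hs; apply HB in Hs; lia).
  change (fun s => pow2 (emax - Z.of_nat s)) with (ltc_weight emax) in Hsum.
  destruct k; [apply (greedy_multi_LTC emin emax D) | apply (greedy_single_LTC emin emax D)];
    auto; lia.
Qed.

Lemma Vpre_step k Vth Vs t : Vs (S t) = 2 * Vs t ->
  Vpre k Vth Vs (S t) =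
  if Rle_dec Vth (Vpre k Vth Vs t)
  then 2 * Vpre k Vth Vs t -
       2 * match k with MultiSpike => Vth | SingleSpike => Vpre k Vth Vs t end
  else 2 * Vpre k Vth Vs t.
Proof.
  intros Hdouble.
  assert (Hhist : forall hs, Vpre_of Vs hs (S t) = 2 * Vpre_of Vs hs t).
  { intros hs. unfold Vpre_of. rewrite Hdouble.
    rewrite (rsum_ext_in _
      (fun p => 2 * (- snd p * pow2 (Z.of_nat t - Z.of_nat (fst p))))).
    - rewrite rsum_scale. lra.
    - intros p _.
      replace (Z.of_nat (S t) - Z.of_nat (fst p))%Z
        with ((Z.of_nat t - Z.of_nat (fst p)) + 1)%Z by lia.
      rewrite pow2_succ. lra. }
  unfold Vpre. cbn [out_hist]. destruct Rle_dec; [| apply Hhist].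
  assert (Happend : forall hs c, Vpre_of Vs (hs ++ (t, c) :: nil) (S t) =
                                 Vpre_of Vs hs (S t) - 2 * c).
  { intros hs c. unfold Vpre_of. rewrite rsum_app. cbn [rsum fold_right fst snd].
    replace (Z.of_nat (S t) - Z.of_nat t)%Z with 1%Z by lia.
    replace (pow2 1) with 2 by (unfold pow2; simpl; lra). lra. }
  rewrite Happend, Hhist. reflexivity.
Qed.

Section Neuron.
Variables (k : ef_kind) (einmin einmax eoutmax : Z) (n : nat) (w : nat -> R)
  (Fin : nat -> list nat) (N : nat).
Hypothesis HN : Z.of_nat N = (einmax - einmin + 1)%Z.
Hypothesis Hinputs : forall i t, (i < n)%nat -> In t (Fin i) -> (t < N)%nat.
Hypothesis Hsilent : forall t, (t + 2 <= N)%nat -> ~ ef_fires k einmin eoutmax n w Fin t.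

Let A := rsum (fun i => w i * LTC_decode einmax (Fin i)) (seq 0 n).
Let Vs := Vsyn einmin n w Fin.
Let Vth := pow2 eoutmax.

Lemma Vsyn_window j : Vs (N - 1 + j) = pow2 (Z.of_nat j) * A.
Proof.
  unfold Vs, Vsyn, A. rewrite <- rsum_scale. apply rsum_ext_in.
  intros i Hi. apply in_seq in Hi.
  assert (Hpsp : h_psp einmin (Fin i) (N - 1 + j) =
                 pow2 (Z.of_nat j) * LTC_decode einmax (Fin i)).
  { unfold h_psp, LTC_decode. rewrite <- rsum_scale. apply rsum_ext_in.
    intros t Ht. specialize (Hinputs i t ltac:(lia) Ht).
    unfold psp. destruct (Z.leb_spec 0 (Z.of_nat (N - 1 + j) - Z.of_nat t)); [| lia].
    rewrite <- !pow2_add. f_equal. lia. }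
  rewrite Hpsp. ring.
Qed.

Lemma out_hist_before_window t : (t <= N - 1)%nat -> out_hist k Vth Vs t = nil.
Proof.
  induction t as [|t IH]; intros Ht; simpl; auto.
  rewrite IH by lia. destruct Rle_dec as [Hfire|]; auto.
  exfalso. apply (Hsilent t ltac:(lia)). unfold ef_fires, Vpre. fold Vth Vs.
  rewrite IH by lia. auto.
Qed.

Lemma Vpre_window j : Vpre k Vth Vs (N - 1 + j) = pow2 (Z.of_nat j) * residual k eoutmax A j.
Proof.
  induction j as [|j IH].
  - rewrite Nat.add_0_r. unfold Vpre, Vpre_of. rewrite out_hist_before_window by lia.
    pose proof (Vsyn_window 0) as H0. rewrite Nat.add_0_r in H0.
    simpl. rewrite H0. unfold pow2; simpl. lra.
  - replace (N - 1 + S j)%nat with (S (N - 1 + j)) by lia.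
    rewrite Vpre_step.
    2:{ replace (S (N - 1 + j)) with (N - 1 + S j)%nat by lia.
        rewrite !Vsyn_window, Nat2Z.inj_succ, <- Z.add_1_r, pow2_succ. lra. }
    rewrite IH, residual_succ, Nat2Z.inj_succ, <- Z.add_1_r, pow2_succ.
    (* the neuron fires iff the greedy threshold is reached, and the resets
       agree once rescaled by 2^j *)
    pose proof (pow2_scaled_threshold eoutmax j (residual k eoutmax A j)) as Hthr.
    assert (Hsplit : Vth = pow2 (Z.of_nat j) * pow2 (eoutmax - Z.of_nat j))
      by (unfold Vth; rewrite <- pow2_add; f_equal; lia).
    fold Vth in Hthr.
    destruct Rle_dec; destruct Rle_dec; try tauto; destruct k; simpl; lra.
Qed.

Lemma ef_fires_window j :
  ef_fires k einmin eoutmax n w Fin (N - 1 + j) <-> greedy_spike k eoutmax A j.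
Proof.
  unfold ef_fires, greedy_spike. fold Vth. fold Vs.
  rewrite Vpre_window. apply pow2_scaled_threshold.
Qed.
End Neuron.

Theorem theorem1 (k : ef_kind) (einmin einmax eoutmin eoutmax : Z)
  (n : nat) (w : nat -> R) (Fin : nat -> list nat) (S : list nat) :
  (einmin <= einmax)%Z ->
  (eoutmin <= eoutmax)%Z ->
  (forall i, (i < n)%nat -> NoDup (Fin i)) ->
  (forall i t, (i < n)%nat -> In t (Fin i) -> (t < Tin einmin einmax)%nat) ->
  (forall t, (t + 2 <= Tin einmin einmax)%nat ->
     ~ ef_fires k einmin eoutmax n w Fin t) ->
  is_LTC k eoutmin eoutmax (relu_out einmax n w Fin) S ->
  forall t,
    (Tin einmin einmax - 1 <= t)%nat ->
    (t <= Tin einmin einmax + Tout eoutmin eoutmax - 2)%nat ->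
    (ef_fires k einmin eoutmax n w Fin t <->
     exists s, In s S /\ t = (Tin einmin einmax - 1 + s)%nat).
Proof.
  intros Hin Hout _ Hinputs Hsilent HLTC t Ht1 Ht2.
  set (N := Tin einmin einmax) in *.
  assert (HN : Z.of_nat N = (einmax - einmin + 1)%Z) by (unfold N, Tin; lia).
  set (j := (t - (N - 1))%nat).
  assert (Hj : (Z.of_nat j <= eoutmax - eoutmin)%Z) by (unfold j, Tout in *; lia).
  replace t with (N - 1 + j)%nat by (unfold j; lia).
  rewrite (ef_fires_window k einmin einmax eoutmax n w Fin N HN Hinputs Hsilent j).
  rewrite (greedy_LTC k eoutmin eoutmax _ S Hout HLTC j Hj).
  split.
  - intros HjS. exists j; auto.
  - intros [s [Hs Hjs]]. replace j with s by lia. exact Hs.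
Qed.
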